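(* Suppose the total Pauli channel is a composition of independent single-Pauli channels, $$\mathcal N(\rho)=\circ_{e\in\mathcal E_\Gamma}\mathcal N^{(e)}(\rho),\qquad \mathcal N^{(e)}(\rho)=(1-p_e)\rho+p_e\,e\rho e^\dagger,$$ with $0<p_e<1/2$. Then for every nontrivial syndrome class $C$, the detector error rate $P^{\mathrm{detect}}_C$, i.e. the probability that an odd number of the errors in $C$ occur, can be learned exactly from the syndrome expectation values $\Lambda(M)$, $M\in\mathcal M$.
   Context: $\mathcal P_n$ is the $n$-qubit Pauli group without phases; $[[A,B]]=\pm1$ according to commutation, $\langle A,B\rangle\in\{0,1\}$ is $0$ iff they commute. $\mathcal E_\Gamma$ is a finite list of non-identity Pauli errors (the same operator may appear several times as distinct elements). A stabilizer code has measured stabilizer subgroup $\mathcal M$; codewords are prepared, the channel applied and $\mathcal M$'s generators measured perfectly, giving syndrome expectation values $\Lambda(M)=\sum_eP(e)[[e,M]]$ where $P$ is the total error distribution. Syndrome classes partition $\mathcal E_\Gamma$ by equality of $(\langle e,M\rangle)_{M\in\mathcal M}$; a class is nontrivial if its syndrome is nonzero. ''Learned exactly'' means uniquely determined by the values $(\Lambda(M))_{M\in\mathcal M}$ among all channels of the stated form. *)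

From HB Require Import structures.
From mathcomp Require Import all_boot all_order all_algebra.
From mathcomp Require Import reals.
Set Implicit Arguments. Unset Strict Implicit. Unset Printing Implicit Defensive.
Import Order.TTheory GRing.Theory Num.Theory.
Local Open Scope ring_scope.

(* n-qubit Paulis without phases: each qubit carries (x-bit, z-bit);
   (0,0)=I, (1,0)=X, (0,1)=Z, (1,1)=Y. *)
Definition pauli (n : nat) := {ffun 'I_n -> bool * bool}.

Definition pid (n : nat) : pauli n := [ffun => (false, false)].

Definition pmul (n : nat) (a b : pauli n) : pauli n :=
  [ffun k => ((a k).1 (+) (b k).1, (a k).2 (+) (b k).2)].

(* <A,B> in {0,1}: false iff A and B commute (symplectic form) *)
Definition sympl (n : nat) (a b : pauli n) : bool :=
  \big[addb/false]_(k < n) (((a k).1 && (b k).2) (+) ((a k).2 && (b k).1)).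

Definition commsign (R : ringType) (n : nat) (a b : pauli n) : R :=
  (-1) ^+ sympl a b.

Definition stab_group (n : nat) (Ms : {set pauli n}) : Prop :=
  [/\ pid n \in Ms,
      (forall a b, a \in Ms -> b \in Ms -> pmul a b \in Ms) &
      (forall a b, a \in Ms -> b \in Ms -> sympl a b = false)].

(* Error list E_Gamma = (e i)_{i < m}; a set S of indices = the errors that
   occurred. Independent single-Pauli channels with probabilities p i. *)
Definition weight (R : ringType) (m : nat) (p : 'I_m -> R) (S : {set 'I_m}) : R :=
  (\prod_(i in S) p i) * \prod_(i in ~: S) (1 - p i).

Definition errprod (n m : nat) (e : 'I_m -> pauli n) (S : {set 'I_m}) : pauli n :=
  [ffun k => (\big[addb/false]_(i in S) (e i k).1,
              \big[addb/false]_(i in S) (e i k).2)].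

Definition Perr (R : ringType) (n m : nat) (e : 'I_m -> pauli n) (p : 'I_m -> R)
  (f : pauli n) : R :=
  \sum_(S : {set 'I_m} | errprod e S == f) weight p S.

Definition Lambda (R : ringType) (n m : nat) (e : 'I_m -> pauli n) (p : 'I_m -> R)
  (M : pauli n) : R :=
  \sum_(f : pauli n) Perr e p f * commsign R f M.

Definition synd_class (n m : nat) (Ms : {set pauli n}) (e : 'I_m -> pauli n)
  (i : 'I_m) : {set 'I_m} :=
  [set j | [forall M in Ms, sympl (e j) M == sympl (e i) M]].

Definition nontrivial_synd (n m : nat) (Ms : {set pauli n}) (e : 'I_m -> pauli n)
  (i : 'I_m) : bool :=
  [exists M in Ms, sympl (e i) M].

Definition Pdetect (R : ringType) (m : nat) (p : 'I_m -> R) (C : {set 'I_m}) : R :=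
  \sum_(S : {set 'I_m} | odd #|S :&: C|) weight p S.

From HB Require Import structures.
From mathcomp Require Import all_boot all_order all_algebra.
From mathcomp Require Import reals ring lra.
Set Implicit Arguments. Unset Strict Implicit. Unset Printing Implicit Defensive.
Import Order.TTheory GRing.Theory Num.Theory.
Local Open Scope ring_scope.

(* By independence, Lambda(M) is the product of (1 - 2 p_j) over the errors j
   anticommuting with M, and 2 P_C^detect = 1 - prod_(j in C) (1 - 2 p_j).
   Fix an error e_i of C. For an error e_j outside C there is a stabilizer M'
   anticommuting with e_i but not with e_j, and M |-> M' M swaps the stabilizers
   anticommuting with both e_i and e_j with those anticommuting with e_j only.
   Hence in the ratio of the products of Lambda(M) over the stabilizers
   anticommuting, resp. commuting, with e_i every factor of an error outside C
   cancels, leaving (prod_(j in C) (1 - 2 p_j))^N with N > 0. All factors being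
   positive, this determines the product over C, hence P_C^detect. *)

Section PauliAlgebra.
Variable n : nat.
Implicit Types a b c M : pauli n.

Lemma sympl_pmulr a b c : sympl a (pmul b c) = sympl a b (+) sympl a c.
Proof.
rewrite /sympl -big_split /=; apply: eq_bigr => k _; rewrite !ffunE /=.
by case: (a k) => [[] []]; case: (b k) => [[] []]; case: (c k) => [[] []].
Qed.

Lemma pmulK a : cancel (pmul a) (pmul a).
Proof.
by move=> b; apply/ffunP => k; rewrite !ffunE /= !addbA !addbb; case: (b k).
Qed.

Lemma sympl_errprodl m (e : 'I_m -> pauli n) S M :
  sympl (errprod e S) M = \big[addb/false]_(j in S) sympl (e j) M.
Proof.
have andb_bigl y (F : 'I_m -> bool) :
    (\big[addb/false]_(j in S) F j) && y = \big[addb/false]_(j in S) (F j && y).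
  by apply: (big_morph (andb^~ y)) => [u v|]; rewrite ?andb_addl.
rewrite /sympl (exchange_big_dep xpredT) //=.
apply: eq_bigr => k _; rewrite !ffunE /= !andb_bigl -big_split.
by apply: eq_bigl => j; rewrite andbT.
Qed.

End PauliAlgebra.

Lemma signr_big_addb (R : pzRingType) (I : finType) (P : pred I) (F : I -> bool) :
  (-1) ^+ (\big[addb/false]_(i | P i) F i) = \prod_(i | P i) (-1) ^+ F i :> R.
Proof.
by apply: (big_morph (fun b : bool => (-1) ^+ b)) => [u v|]; rewrite ?signr_addb.
Qed.

Lemma prodr_if_card (R : pzSemiRingType) (I : finType) (A : {set I}) (Q : pred I)
    (x : R) :
  \prod_(i in A) (if Q i then x else 1) = x ^+ #|[set i in A | Q i]|.
Proof.
rewrite -prodr_const big_mkcond [RHS]big_mkcond /=.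
by apply: eq_bigr => i _; rewrite inE; case: (i \in A); case: (Q i).
Qed.

Section ErrorModel.
Variables (R : comNzRingType) (m : nat).
Implicit Types (p s : 'I_m -> R) (C : {set 'I_m}).

Lemma sum_weight_prod p s :
  \sum_(S : {set 'I_m}) weight p S * \prod_(j in S) s j =
  \prod_j (p j * s j + (1 - p j)).
Proof.
rewrite bigA_distr; apply: eq_bigr => S _.
rewrite [RHS](bigID (mem S)) /= /weight mulrAC -big_split /=; congr (_ * _).
  by apply: eq_bigr => j ->.
by apply: eq_big => [j|j]; rewrite inE // => /negbTE ->.
Qed.

Lemma sum_weight p : \sum_(S : {set 'I_m}) weight p S = 1.
Proof.
transitivity (\sum_(S : {set 'I_m}) weight p S * \prod_(j in S) (1 : R)).
  by apply: eq_bigr => S _; rewrite big1 ?mulr1.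
by rewrite sum_weight_prod big1 // => j _; rewrite mulr1 subrKC.
Qed.

Lemma sum_weight_sign p C :
  \sum_(S : {set 'I_m}) weight p S * (-1) ^+ odd #|S :&: C| =
  \prod_(j in C) (1 - 2 * p j).
Proof.
transitivity (\sum_(S : {set 'I_m}) weight p S *
    \prod_(j in S) (if j \in C then -1 else 1)).
  apply: eq_bigr => S _; rewrite signr_odd prodr_if_card.
  by congr (_ * _ ^+ #|_|); apply/setP => j; rewrite !inE.
rewrite sum_weight_prod [RHS]big_mkcond; apply: eq_bigr => j _.
by case: (j \in C); rewrite ?mulr1 ?mulrN1 //; ring.
Qed.

Lemma Pdetect_prod p C : 2 * Pdetect p C = 1 - \prod_(j in C) (1 - 2 * p j).
Proof.
rewrite -sum_weight_sign -{2}(sum_weight p) -sumrB /Pdetect big_mkcond mulr_sumr.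
apply: eq_bigr => S _; case: odd; rewrite ?mulr1 ?mulrN1; ring.
Qed.

Lemma Lambda_prod n (e : 'I_m -> pauli n) p M :
  Lambda e p M = \prod_j (if sympl (e j) M then 1 - 2 * p j else 1).
Proof.
transitivity (\sum_(S : {set 'I_m}) weight p S * commsign R (errprod e S) M).
  rewrite /Lambda /Perr [RHS](partition_big (errprod e) xpredT) //=.
  by apply: eq_bigr => f _; rewrite big_distrl; apply: eq_bigr => S /eqP ->.
transitivity (\sum_(S : {set 'I_m}) weight p S *
    \prod_(j in S) (if sympl (e j) M then -1 else 1)).
  apply: eq_bigr => S _; rewrite /commsign sympl_errprodl signr_big_addb.
  by congr (_ * _); apply: eq_bigr => j _; case: sympl.
rewrite sum_weight_prod; apply: eq_bigr => j _.
by case: sympl; rewrite ?mulr1 ?mulrN1 //; ring.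
Qed.

End ErrorModel.

Section StabilizerCounting.
Variables (n : nat) (Ms : {set pauli n}).
Hypothesis Ms_mul : forall a b, a \in Ms -> b \in Ms -> pmul a b \in Ms.
Implicit Types a b : pauli n.

(* M |-> M' M is a bijection of Ms that flips the commutation with a only. *)
Lemma card_anticomm_flip a b M' :
  M' \in Ms -> sympl a M' -> ~~ sympl b M' ->
  #|[set M in Ms | sympl a M && sympl b M]| =
  #|[set M in Ms | ~~ sympl a M && sympl b M]|.
Proof.
move=> M'Ms aM' /negbTE bM'.
rewrite -(card_imset _ (can_inj (pmulK M'))); apply: eq_card => M.
rewrite inE; apply/imsetP/idP => [[X] | /andP[MMs /andP[/negbTE aM bM]]].
  rewrite inE => /andP[XMs /andP[aX bX]] ->.
  by rewrite Ms_mul // !sympl_pmulr aM' aX bM' bX.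
exists (pmul M' M); last by rewrite pmulK.
by rewrite inE Ms_mul // !sympl_pmulr aM' aM bM' bM.
Qed.

Lemma exists_anticomm_comm a b :
  (exists2 M, M \in Ms & sympl a M) ->
  (exists2 M, M \in Ms & sympl a M != sympl b M) ->
  exists2 M, M \in Ms & sympl a M && ~~ sympl b M.
Proof.
move=> [M1 M1Ms aM1] [M2 M2Ms].
case: (boolP (sympl b M1)) => bM1; last by exists M1; rewrite ?aM1.
case: (boolP (sympl a M2)) => aM2 abM2.
  by exists M2; rewrite // aM2; apply: contra abM2 => ->.
exists (pmul M1 M2); first exact: Ms_mul.
by rewrite !sympl_pmulr aM1 bM1 (negbTE aM2); move: abM2; case: sympl.
Qed.

Lemma synd_classP m (e : 'I_m -> pauli n) i j :
  reflect {in Ms, forall M, sympl (e j) M = sympl (e i) M}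
          (j \in synd_class Ms e i).
Proof.
rewrite inE; apply: (iffP forallP) => [h M MMs | h M].
  by have /implyP/(_ MMs)/eqP := h M.
by apply/implyP => MMs; rewrite h.
Qed.

Lemma card_anticomm_synd_class m (e : 'I_m -> pauli n) i j :
  nontrivial_synd Ms e i ->
  #|[set M in Ms | sympl (e i) M && sympl (e j) M]| =
  (#|[set M in Ms | ~~ sympl (e i) M && sympl (e j) M]|
   + (j \in synd_class Ms e i) * #|[set M in Ms | sympl (e i) M]|)%N.
Proof.
move=> /existsP[Mi /andP[MiMs aMi]].
case: (synd_classP e i j) => [same | notsame].
  have -> : [set M in Ms | ~~ sympl (e i) M && sympl (e j) M] = set0.
    apply/setP => M; rewrite !inE.
    by case: (boolP (M \in Ms)) => // /same ->; rewrite andNb.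
  rewrite cards0 mul1n; apply: eq_card => M; rewrite !inE.
  by case: (boolP (M \in Ms)) => // /same ->; rewrite andbb.
rewrite mul0n addn0.
have diff_ij : exists2 M, M \in Ms & sympl (e i) M != sympl (e j) M.
  apply/exists_inP/contraT => /exists_inPn nodiff; case: notsame => M MMs.
  by apply/eqP; rewrite eq_sym; apply/negPn/nodiff.
have [|M' M'Ms /andP[aM' bM']] := exists_anticomm_comm _ diff_ij.
  by exists Mi.
exact: card_anticomm_flip aM' bM'.
Qed.

Lemma prod_Lambda_anticomm (R : comNzRingType) m (e : 'I_m -> pauli n)
    (r : 'I_m -> R) i :
  nontrivial_synd Ms e i ->
  \prod_(M in [set M in Ms | sympl (e i) M]) Lambda e r M =
  \prod_(M in [set M in Ms | ~~ sympl (e i) M]) Lambda e r M *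
  (\prod_(j in synd_class Ms e i) (1 - 2 * r j))
     ^+ #|[set M in Ms | sympl (e i) M]|.
Proof.
move=> nt_i.
under eq_bigr => M _ do rewrite Lambda_prod.
under [X in _ = X * _]eq_bigr => M _ do rewrite Lambda_prod.
rewrite exchange_big [X in _ = X * _]exchange_big -prodrXl [X in _ = _ * X]big_mkcond.
rewrite -big_split /=; apply: eq_bigr => j _.
have sep_sep (P Q : pred (pauli n)) :
    [set M in [set M in Ms | P M] | Q M] = [set M in Ms | P M && Q M].
  by apply/setP => M; rewrite !inE andbA.
rewrite !prodr_if_card !sep_sep card_anticomm_synd_class // exprD.
by case: (j \in synd_class Ms e i); rewrite ?mul1n ?mul0n ?expr0.
Qed.

End StabilizerCounting.

Lemma Lambda_gt0 (R : numDomainType) n m (e : 'I_m -> pauli n) (r : 'I_m -> R) M :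
  (forall j, 2 * r j < 1) -> 0 < Lambda e r M.
Proof.
move=> r_small; rewrite Lambda_prod; apply: prodr_gt0 => j _.
by case: sympl; rewrite ?subr_gt0.
Qed.

Theorem lemma7 (R : realType) (n m : nat) (Ms : {set pauli n})
  (e : 'I_m -> pauli n) :
  stab_group Ms ->
  (forall i, e i != pid n) ->
  forall p q : 'I_m -> R,
  (forall i, 0 < p i < 2^-1) ->
  (forall i, 0 < q i < 2^-1) ->
  (forall M, M \in Ms -> Lambda e p M = Lambda e q M) ->
  forall i : 'I_m, nontrivial_synd Ms e i ->
  Pdetect p (synd_class Ms e i) = Pdetect q (synd_class Ms e i).
Proof.
move=> [_ Ms_mul _] _ p q p_bounds q_bounds same_Lambda i nt_i.
have small (r : 'I_m -> R) : (forall j, 0 < r j < 2^-1) -> forall j, 2 * r j < 1.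
  by move=> r_bounds j; have /andP[_] := r_bounds j; lra.
have prodC_ge0 (r : 'I_m -> R) : (forall j, 0 < r j < 2^-1) ->
    0 <= \prod_(j in synd_class Ms e i) (1 - 2 * r j).
  by move=> /small r_small; apply/prodr_ge0 => j _; rewrite subr_ge0 ltW.
set N := #|[set M in Ms | sympl (e i) M]|.
have N_gt0 : (0 < N)%N.
  case/existsP: nt_i => M /andP[MMs aM].
  by apply/card_gt0P; exists M; rewrite inE MMs.
have comm_prod_neq0 : \prod_(M in [set M in Ms | ~~ sympl (e i) M]) Lambda e q M != 0.
  by apply/lt0r_neq0/prodr_gt0 => M _; apply/Lambda_gt0/small.
have same_prod (P : pred (pauli n)) :
    \prod_(M in [set M in Ms | P M]) Lambda e p M =
    \prod_(M in [set M in Ms | P M]) Lambda e q M.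
  by apply: eq_bigr => M; rewrite inE => /andP[MMs _]; apply: same_Lambda.
have same_prodC : \prod_(j in synd_class Ms e i) (1 - 2 * p j) =
                  \prod_(j in synd_class Ms e i) (1 - 2 * q j).
  apply/eqP; rewrite -(eqrXn2 N_gt0) ?prodC_ge0 //; apply/eqP.
  have := prod_Lambda_anticomm Ms_mul p nt_i.
  by rewrite !same_prod prod_Lambda_anticomm // => /(mulfI comm_prod_neq0).
apply: (mulfI (x := 2)); first by rewrite pnatr_eq0.
by rewrite !Pdetect_prod same_prodC.
Qed.
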